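(* A ring $R$ is almost Armendariz if and only if the polynomial ring $R[x]$ is almost Armendariz.
   Context: All rings are associative with identity. For a ring $R$, $P(R)$ denotes the prime radical of $R$ (the intersection of all prime ideals of $R$, equivalently the set of strongly nilpotent elements of $R$). A ring $R$ is called almost Armendariz if whenever $f(x)=\sum_{i=0}^m a_ix^i$ and $g(x)=\sum_{j=0}^n b_jx^j\in R[x]$ satisfy $f(x)g(x)=0$, then $a_ib_j\in P(R)$ for all $0\le i\le m$, $0\le j\le n$. *)

From HB Require Import structures.
From mathcomp Require Import all_boot all_order all_algebra.
Set Implicit Arguments. Unset Strict Implicit. Unset Printing Implicit Defensive.
Import GRing.Theory.
Local Open Scope ring_scope.

Definition is_ideal (R : nzRingType) (I : R -> Prop) : Prop :=
  [/\ I 0,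
      (forall a b, I a -> I b -> I (a - b)),
      (forall r a, I a -> I (r * a)) &
      (forall r a, I a -> I (a * r))].

(* Prime ideal: proper ideal P such that for all ideals A, B,
   AB ⊆ P implies A ⊆ P or B ⊆ P.  (AB ⊆ P iff all products a*b lie in P,
   since P is additively closed.) *)
Definition is_prime_ideal (R : nzRingType) (P : R -> Prop) : Prop :=
  [/\ is_ideal P, ~ P 1 &
      (forall A B : R -> Prop, is_ideal A -> is_ideal B ->
         (forall a b, A a -> B b -> P (a * b)) ->
         (forall a, A a -> P a) \/ (forall b, B b -> P b))].

Definition prime_radical (R : nzRingType) (x : R) : Prop :=
  forall P : R -> Prop, is_prime_ideal P -> P x.

(* Almost Armendariz rings. Coefficients beyond the degree are 0, which
   lies in P(R), so quantifying over all indices is harmless. *)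
Definition almost_armendariz (R : nzRingType) : Prop :=
  forall f g : {poly R}, f * g = 0 ->
    forall i j : nat, prime_radical (f`_i * g`_j).

(* The prime radical of R[x] meets the constants in exactly P(R): a prime
   Q of R[x] contracts to a prime of R, and a prime P of R extends to the
   prime P[x] of R[x].  Consequently a product p q in R[x] lies in P(R[x])
   as soon as every p_s q_t lies in P(R).
   If R[x] is almost Armendariz, apply it to f, g viewed as polynomials with
   constant coefficients.  If R is, and F G = 0 in R[x][y], substitute
   y := x^k for k exceeding every coefficient degree (Kronecker): then
   F(x^k) G(x^k) = 0 in R[x], and the coefficients of F(x^k) are exactly the
   coefficients of the coefficients of F, so all (F_i)_s (G_j)_t lie in P(R). *)
From HB Require Import structures.
From mathcomp Require Import all_boot all_order all_algebra.
From mathcomp Require Import zify.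
From Stdlib Require Import Classical.
Set Implicit Arguments. Unset Strict Implicit. Unset Printing Implicit Defensive.
Import GRing.Theory.
Local Open Scope ring_scope.

Lemma ex_last_counterexample (Q : nat -> Prop) N :
  (forall n, (N <= n)%N -> Q n) -> (exists n, ~ Q n) ->
  exists m, ~ Q m /\ forall i, (m < i)%N -> Q i.
Proof.
elim: N => [|N IH] QN [n nQn]; first by case: nQn; apply: QN.
have [QN'|nQN] := classic (Q N); last by exists N.
apply: IH; last by exists n.
by move=> k; rewrite leq_eqVlt => /predU1P[<- //|]; apply: QN.
Qed.

Section Ideals.
Variables (R : nzRingType) (I : R -> Prop).
Hypothesis idealI : is_ideal I.

Lemma ideal0 : I 0.
Proof. by case: idealI. Qed.

Lemma idealB a b : I a -> I b -> I (a - b).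
Proof. by case: idealI => _ + _ _; apply. Qed.

Lemma idealN a : I a -> I (- a).
Proof. by move=> Ia; rewrite -sub0r; apply: idealB => //; apply: ideal0. Qed.

Lemma idealD a b : I a -> I b -> I (a + b).
Proof. by move=> Ia Ib; rewrite -[b]opprK; apply/idealB/idealN. Qed.

Lemma idealMl r a : I a -> I (r * a).
Proof. by case: idealI => _ _ + _; apply. Qed.

Lemma idealMr r a : I a -> I (a * r).
Proof. by case: idealI => _ _ _; apply. Qed.

Lemma ideal_sum (J : Type) (s : seq J) (P : pred J) (F : J -> R) :
  (forall j, P j -> I (F j)) -> I (\sum_(j <- s | P j) F j).
Proof. by move=> IF; apply: big_ind => //; [apply: ideal0 | apply: idealD]. Qed.

Definition polyI (h : {poly R}) : Prop := forall n, I h`_n.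

Lemma polyI_ideal : is_ideal polyI.
Proof.
split=> [n | a b Ia Ib n | r a Ia n | r a Ia n].
- by rewrite coef0; apply: ideal0.
- by rewrite coefB; apply: idealB.
- by rewrite coefM; apply: ideal_sum => i _; apply: idealMl.
- by rewrite coefM; apply: ideal_sum => i _; apply: idealMr.
Qed.

Lemma polyIC c : I c -> polyI c%:P.
Proof. by move=> Ic n; rewrite coefC; case: eqP => // _; apply: ideal0. Qed.

Lemma ideal_coefM_top (f g : {poly R}) m n :
  (forall i, (m < i)%N -> I f`_i) -> (forall j, (n < j)%N -> I g`_j) ->
  I ((f * g)`_(m + n) - f`_m * g`_n).
Proof.
move=> If Ig; have mlt : (m < (m + n).+1)%N by rewrite ltnS leq_addr.
rewrite coefM (bigD1 (Ordinal mlt)) //= addKn addrAC subrr add0r.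
apply: ideal_sum => i; rewrite -val_eqE /= => neq_im.
have [lt_im|gt_im|eq_im] := ltngtP i m; last by rewrite eq_im eqxx in neq_im.
- by apply: idealMl; apply: Ig; lia.
- by apply: idealMr; apply: If.
Qed.

End Ideals.

Lemma prime_radical0 (R : nzRingType) : prime_radical (0 : R).
Proof. by move=> P [IP _ _]; exact: ideal0 IP. Qed.

(* the ideals A = {x | x R b ⊆ P} and B = {y | A y ⊆ P} satisfy A B ⊆ P *)
Lemma prime_idealP (R : nzRingType) (P : R -> Prop) :
  is_prime_ideal P <->
  [/\ is_ideal P, ~ P 1 &
      forall a b, (forall r, P (a * r * b)) -> P a \/ P b].
Proof.
split=> [[IP nP1 primeP] | [IP nP1 elemP]]; split=> //.
  move=> a b Parb; pose A x := forall r, P (x * r * b).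
  pose B y := forall x, A x -> P (x * y).
  have IA : is_ideal A.
    split=> [r | x y Ax Ay r | s x Ax r | s x Ax r].
    - by rewrite !mul0r; exact: ideal0 IP.
    - by rewrite !mulrBl; apply: (idealB IP); [apply: Ax | apply: Ay].
    - by rewrite -!mulrA; apply: (idealMl IP); rewrite !mulrA.
    - by rewrite -(mulrA x); apply: Ax.
  have IB : is_ideal B.
    split=> [x _ | x y Bx By z Az | s y By x Ax | s y By x Ax].
    - by rewrite mulr0; exact: ideal0 IP.
    - by rewrite mulrBr; apply: (idealB IP); [apply: Bx | apply: By].
    - by rewrite mulrA; apply: By => r; rewrite -(mulrA x); apply: Ax.
    - by rewrite mulrA; apply: (idealMr IP); apply: By.
  have [AP|BP] := primeP A B IA IB (fun x y Ax By => By x Ax).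
    by left; apply: AP.
  by right; apply: BP => x /(_ 1); rewrite mulr1.
move=> A B IA IB ABP.
have [AP|nAP] := classic (forall a, A a -> P a); first by left.
have [a [Aa nPa]] : exists a, A a /\ ~ P a.
  apply: NNPP => nex; apply: nAP => a Aa.
  by apply: NNPP => nPa; apply: nex; exists a.
right=> b Bb; have [] // := elemP a b => r.
by apply: ABP => //; apply: (idealMr IA).
Qed.

Lemma ideal_polyM (R : nzRingType) (Q : {poly R} -> Prop) (p q : {poly R}) :
  is_ideal Q -> (forall s t, Q (p`_s * q`_t)%:P) -> Q (p * q).
Proof.
move=> IQ Qpq; rewrite -(coefK p) -(coefK q) !poly_def mulr_suml.
apply: (ideal_sum IQ) => s _; rewrite mulr_sumr.
apply: (ideal_sum IQ) => t _.
rewrite -!mul_polyC mulrA -(mulrA _ 'X^s) -commr_polyXn !mulrA -polyCM.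
by apply/(idealMr IQ)/(idealMr IQ).
Qed.

Lemma prime_ideal_contract (R : nzRingType) (Q : {poly R} -> Prop) :
  is_prime_ideal Q -> is_prime_ideal (fun c : R => Q c%:P).
Proof.
move=> [IQ nQ1 primeQ]; split=> //.
  split=> [|a b | r a | r a].
  - by rewrite polyC0; exact: ideal0 IQ.
  - by rewrite polyCB; apply: (idealB IQ).
  - by rewrite polyCM; apply: (idealMl IQ).
  - by rewrite polyCM; apply: (idealMr IQ).
move=> A B IA IB ABQ.
have [AQ|BQ] := primeQ _ _ (polyI_ideal IA) (polyI_ideal IB)
  (fun p q Ap Bq => ideal_polyM IQ (fun s t => ABQ _ _ (Ap s) (Bq t))).
  by left=> a /(polyIC IA); apply: AQ.
by right=> b /(polyIC IB); apply: BQ.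
Qed.

(* the top coefficients of f and g outside P multiply into P after inserting
   any r, which contradicts primality of P *)
Lemma prime_ideal_poly (R : nzRingType) (P : R -> Prop) :
  is_prime_ideal P -> is_prime_ideal (polyI P).
Proof.
move=> /prime_idealP[IP nP1 elemP]; apply/prime_idealP; split.
- exact: polyI_ideal.
- by move/(_ 0%N); rewrite coef1.
move=> f g fPg.
have [Pf|nPf] := classic (polyI P f); first by left.
have [Pg|nPg] := classic (polyI P g); first by right.
have top h : ~ polyI P h -> exists m, ~ P h`_m /\ forall i, (m < i)%N -> P h`_i.
  move=> nPh; apply: (@ex_last_counterexample _ (size h)).
    by move=> n /(nth_default 0) ->; exact: ideal0 IP.
  by apply: not_all_ex_not.
have [m [nPfm Pf_top]] := top f nPf; have [n [nPgn Pg_top]] := top g nPg.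
exfalso; have [] // := elemP f`_m g`_n => r.
have Pfrg : P ((f * (r%:P * g))`_(m + n)) by rewrite mulrA; apply: fPg.
have Prg_top j : (n < j)%N -> P (r%:P * g)`_j.
  by move/Pg_top; rewrite coefCM; apply: (idealMl IP).
have := idealB IP Pfrg (ideal_coefM_top IP Pf_top Prg_top).
by rewrite coefCM opprB addrC subrK mulrA.
Qed.

Lemma prime_radicalC (R : nzRingType) (c : R) :
  prime_radical c%:P <-> prime_radical c.
Proof.
split=> [Rc P /prime_ideal_poly/Rc/(_ 0%N) | Rc Q /prime_ideal_contract/Rc //].
by rewrite coefC.
Qed.

Lemma prime_radical_polyM (R : nzRingType) (p q : {poly R}) :
  (forall s t, prime_radical (p`_s * q`_t)) -> prime_radical (p * q).
Proof.
move=> Rpq Q primeQ; have [IQ _ _] := primeQ.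
by apply: (ideal_polyM IQ) => s t; apply: Rpq _ (prime_ideal_contract primeQ).
Qed.

Lemma coef_size_bounded (R : nzRingType) (F : {poly {poly R}}) :
  exists k, forall i, leq (size F`_i) k.
Proof.
exists (\big[maxn/0%N]_(i < size F) size F`_i) => i.
have [lt_iF|le_Fi] := ltnP i (size F).
  exact: (@leq_bigmax_cond _ xpredT (fun i : 'I_(size F) => size F`_i)
                                     (Ordinal lt_iF)).
by rewrite nth_default // size_poly0.
Qed.

Lemma coef_horner_Xn (R : nzRingType) (F : {poly {poly R}}) k :
  (forall i, leq (size F`_i) k) ->
  forall i s, (s < k)%N -> (F.['X^k])`_(k * i + s) = (F`_i)`_s.
Proof.
elim/poly_ind: F => [|F c IH] szF i s lt_sk; first by rewrite horner0 !coef0.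
rewrite hornerMXaddC !coefD coefMXn coefMX coefC.
have szc : (size c <= k)%N by have := szF 0%N; rewrite coefD coefMX coefC add0r.
have szF' j : leq (size F`_j) k.
  by have := szF j.+1; rewrite coefD coefMX coefC addr0.
case: i => [|i]; first by rewrite muln0 add0n lt_sk coef0 !add0r.
have -> : (k * i.+1 + s < k)%N = false by apply/negbTE; lia.
have -> : (k * i.+1 + s - k = k * i + s)%N by lia.
by rewrite IH // coef0 addr0 (nth_default _ (leq_trans szc _)) ?addr0 //; lia.
Qed.

Lemma almost_armendariz_poly (R : nzRingType) :
  almost_armendariz R -> almost_armendariz {poly R}.
Proof.
move=> armR F G FG0 i j; apply: prime_radical_polyM => s t.
have [kF szF] := coef_size_bounded F; have [kG szG] := coef_size_bounded G.
pose k := maxn kF kG.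
have {}szF i' : leq (size F`_i') k by apply: leq_trans (szF i') (leq_maxl _ _).
have {}szG j' : leq (size G`_j') k by apply: leq_trans (szG j') (leq_maxr _ _).
have [lt_sk|le_ks] := ltnP s k; last first.
  rewrite nth_default ?mul0r; last exact: leq_trans le_ks.
  exact: prime_radical0.
have [lt_tk|le_kt] := ltnP t k; last first.
  rewrite [G`_j`_t]nth_default ?mulr0; last exact: leq_trans le_kt.
  exact: prime_radical0.
rewrite -(coef_horner_Xn szF i lt_sk) -(coef_horner_Xn szG j lt_tk).
apply: armR; rewrite -hornerM_comm ?FG0 ?horner0 //.
by rewrite /comm_poly commr_polyXn.
Qed.

Lemma almost_armendariz_of_poly (R : nzRingType) :
  almost_armendariz {poly R} -> almost_armendariz R.
Proof.
move=> armRx f g fg0 i j; apply/prime_radicalC; rewrite polyCM -!(coef_map polyC).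
by apply: armRx; rewrite -rmorphM fg0 rmorph0.
Qed.

Theorem theorem2p3 (R : nzRingType) :
  almost_armendariz R <-> almost_armendariz {poly R}.
Proof.
split; [exact: almost_armendariz_poly | exact: almost_armendariz_of_poly].
Qed.
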